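(* Let $AP$ be a finite set, $p\in AP$, and let $\mathcal{A}=(2^{AP},Q,\delta,q_0,H,H_\exists,\Omega)$ be an HFTA that is nondeterministic in one path, with $Q_\ell$ the existential component containing $q_0$. Let $\exists^{C}p.\mathcal{A}=(2^{AP\setminus\{p\}},Q,\delta',q_0,H,H_\exists,\Omega)$, where for $q\in Q$ and $a\subseteq AP\setminus\{p\}$, $\delta'(q,a)=\delta(q,a)$ if $q\notin Q_\ell$ and $\delta'(q,a)=\delta(q,a)\vee\delta(q,a\cup\{p\})$ if $q\in Q_\ell$. Then $\mathcal{L}(\exists^{C}p.\mathcal{A})=\exists^{C}p.\mathcal{L}(\mathcal{A})$.
   Context: Trees: for a nonempty set $D$, a tree is a nonempty prefix-closed $T\subseteq D^*$ with root $\varepsilon$; children of $w$ are nodes $w\cdot d\in T$; non-blocking: every node has a child; an infinite path from the root is a sequence $\pi(0)\pi(1)\cdots$ with $\pi(0)=\varepsilon$ and $\pi(k+1)$ a child of $\pi(k)$. A Kripke tree over $AP$ is a non-blocking tree with $\mathit{Lab}:T\to2^{AP}$. Chain projection: for a set $L$ of Kripke trees over $AP$ and $p\in AP$, $\exists^{C}p.L$ is the set of Kripke trees $(T,\mathit{Lab})$ over $AP\setminus\{p\}$ for which there are an infinite path $\pi$ of $T$ from the root and a Kripke tree $(T,\mathit{Lab}')\in L$ such that $\mathit{Lab}'(w)=\mathit{Lab}(w)$ for nodes $w$ not on $\pi$ and $\mathit{Lab}'(w)\setminus\{p\}=\mathit{Lab}(w)$ for nodes $w$ on $\pi$. First-order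 one-step logic: for finite $Q$, a one-step interpretation is $(S,I)$, $S\neq\emptyset$, $I:S\to2^Q$; first-order $Q$-constraints are sentences of $\theta::=\top\mid\bot\mid q(x)\mid x=y\mid x\neq y\mid\theta\vee\theta\mid\theta\wedge\theta\mid\exists x.\theta\mid\forall x.\theta$ interpreted over $S$ with $q(x)$ true iff $q\in I(x)$. A $Q$-type is a set $A\subseteq Q$, with $t(A)(x):=\bigwedge_{q\in A}q(x)$ ($\top$ if $A=\emptyset$). For sets $T_\exists=\{A_1,\dots,A_n\}$ and $T_\forall$ of $Q$-types, the basic formula $\theta^{=}(T_\exists,T_\forall)$ is $\exists x_1\dots\exists x_n.(\mathrm{diff}(x_1,\dots,x_n)\wedge\bigwedge_{i=1}^n t(A_i)(x_i)\wedge\forall y.(\mathrm{diff}(x_1,\dots,x_n,y)\to\bigvee_{A\in T_\forall}t(A)(y)))$, where $\mathrm{diff}(z_1,\dots,z_k):=\bigwedge_{i\neq j}z_i\neq z_j$. For nonempty $Q'\subseteq Q$, $\theta^{=}(T_\exists,T_\forall)$ is $Q'$-functional in one direction if some $A\in T_\exists$ is a singleton $\{q\}$ with $q\in Q'$ and every $B\in(T_\exists\setminus\{A\})\cup T_\forall$ is disjoint from $Q'$; a first-order $Q$-constraint is $Q'$-functional in one direction if it is a disjunction of basic formulas that are. FTA $(\Sigma,Q,\delta,q_0,\Omega)$: $\delta$ maps $Q\times\Sigma$ to first-order $Q$-constraints. A run on a non-blocking $\Sigma$-labelled tree $(T,\mathit{Lab})$ is a $(Q\times T)$-labelled tree $(T_r,\mathit{Lab}_r)$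 with $\mathit{Lab}_r(\varepsilon)=(q_0,\varepsilon)$ in which each node $y$ with $\mathit{Lab}_r(y)=(q,w)$ has children whose labels are exactly $\{(q',w'):w'\in S_w,q'\in I(w')\}$ for some $(S_w,I)\models\delta(q,\mathit{Lab}(w))$, $S_w$ the children of $w$; a node $y$ reads $w$ if $\mathit{Lab}_r(y)=(q,w)$ for some $q$. It is accepting if along every infinite path from the root of $T_r$ the highest colour seen infinitely often is even; $\mathcal{L}$ is the set of trees with an accepting run. HFTA $(\Sigma,Q,\delta,q_0,H,H_\exists,\Omega)$: FTA with ordered partition $H=\langle Q_1,\dots,Q_n\rangle$ of $Q$ (order of $Q_i$ is $i$), each component existential (those in $H_\exists$), universal or transient: transient $Q_i$: $\delta(q,a)$ mentions only states of order $<i$; existential $Q_i$: $\delta(q,a)$ is a disjunction of $\exists x.(q'(x)\wedge\theta(x))$, $q'\in Q_i$, $\theta(x)$ mentioning only states of order $<i$; universal $Q_i$: conjunction of $\forall x.(q'(x)\vee\theta(x))$ likewise; $\Omega$ on an existential (universal) component has values in $\{m-1,m\}$, $m$ even (odd). An HFTA is nondeterministic in one path if $q_0$ lies in an existential component $Q_\ell$ and (1) for all $q\in Q_\ell$, $a\in\Sigma$, $\delta(q,a)$ is $Q_\ell$-functional in one direction; (2) for every $\mathcal{T}\in\mathcal{L}(\mathcal{A})$ and every infinite path $\pi$ of $\mathcal{T}$ from the root, there is an accepting run such that for each node $w$ on $\pi$ exactly one node of the run reads $w$, and its state belongs to $Q_\ell$. *)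

From Stdlib Require Lists.List.
From mathcomp Require Import all_boot all_order.
Set Implicit Arguments. Unset Strict Implicit. Unset Printing Implicit Defensive.

Inductive form (Q : Type) : Type :=
| FTrue | FFalse
| FAtom of Q & nat
| FEq of nat & nat
| FNeq of nat & nat
| FOr of form Q & form Q
| FAnd of form Q & form Q
| FEx of nat & form Q
| FAll of nat & form Q.
Arguments FTrue {Q}. Arguments FFalse {Q}.

Fixpoint fv (Q : Type) (f : form Q) : seq nat :=
  match f with
  | FTrue | FFalse => [::]
  | FAtom _ x => [:: x]
  | FEq x y | FNeq x y => [:: x; y]
  | FOr f g | FAnd f g => fv f ++ fv g
  | FEx x f | FAll x f => filter (predC1 x) (fv f)
  end.

Definition sentence (Q : Type) (f : form Q) : bool := nilp (fv f).

Fixpoint fstates (Q : Type) (f : form Q) : seq Q :=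
  match f with
  | FTrue | FFalse | FEq _ _ | FNeq _ _ => [::]
  | FAtom q _ => [:: q]
  | FOr f g | FAnd f g => fstates f ++ fstates g
  | FEx _ f | FAll _ f => fstates f
  end.

Definition upd (X : Type) (e : nat -> X) (x : nat) (v : X) : nat -> X :=
  fun i => if i == x then v else e i.

(* satisfaction in a one-step interpretation (S, I), S a subset of X *)
Fixpoint sat (Q : finType) (X : Type) (S : X -> Prop) (I : X -> {set Q})
    (e : nat -> X) (f : form Q) : Prop :=
  match f with
  | FTrue => True
  | FFalse => False
  | FAtom q x => q \in I (e x)
  | FEq x y => e x = e y
  | FNeq x y => e x <> e y
  | FOr f g => sat S I e f \/ sat S I e g
  | FAnd f g => sat S I e f /\ sat S I e g
  | FEx x f => exists v, S v /\ sat S I (upd e x v) f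
  | FAll x f => forall v, S v -> sat S I (upd e x v) f
  end.

(* (S, I) |= f  (for sentences the environment is irrelevant) *)
Definition models (Q : finType) (X : Type) (S : X -> Prop) (I : X -> {set Q})
    (f : form Q) : Prop :=
  forall e : nat -> X, (forall i, S (e i)) -> sat S I e f.

Definition fequiv (Q : finType) (f g : form Q) : Prop :=
  forall (X : Type) (S : X -> Prop) (I : X -> {set Q}),
    (exists x, S x) -> (models S I f <-> models S I g).

Definition bigOr (Q : Type) (l : seq (form Q)) : form Q := foldr (@FOr Q) FFalse l.
Definition bigAnd (Q : Type) (l : seq (form Q)) : form Q := foldr (@FAnd Q) FTrue l.

Definition ftype (Q : finType) (A : {set Q}) (x : nat) : form Q :=
  bigAnd [seq FAtom q x | q <- enum A].

Fixpoint FExs (Q : Type) (n : nat) (f : form Q) : form Q :=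
  match n with 0 => f | n'.+1 => FExs n' (FEx n' f) end.
(* FExs n f = Ex 0. Ex 1. ... Ex (n-1). f *)

Definition fdiff (Q : Type) (k : nat) : form Q :=
  bigAnd (flatten [seq [seq @FNeq Q i j | j <- iota 0 k & j != i] | i <- iota 0 k]).
Definition fndiff (Q : Type) (k : nat) : form Q :=
  bigOr (flatten [seq [seq @FEq Q i j | j <- iota 0 k & j != i] | i <- iota 0 k]).

(* basic formula theta^=(TE, TA): x_i is variable i-1 (i=1..n), y is variable n;
   (diff(x,y) -> phi) is written in negation normal form as (not diff(x,y)) \/ phi *)
Definition basic (Q : finType) (TE TA : {set {set Q}}) : form Q :=
  let As := enum TE in
  let n := size As in
  FExs n (FAnd (fdiff Q n)
         (FAnd (bigAnd [seq ftype (nth set0 As i) i | i <- iota 0 n])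
               (FAll n (FOr (fndiff Q n.+1) (bigOr [seq ftype A n | A <- enum TA]))))).

Definition functional_basic (Q : finType) (Q' : {set Q}) (TE TA : {set {set Q}}) : Prop :=
  exists2 A, A \in TE &
    exists2 q, q \in Q' & A = [set q] /\
      forall B, B \in (TE :\ A) :|: TA -> [disjoint B & Q'].

Definition functional (Q : finType) (Q' : {set Q}) (f : form Q) : Prop :=
  Q' != set0 /\
  exists l : seq ({set {set Q}} * {set {set Q}}),
    (forall x, Stdlib.Lists.List.In x l -> functional_basic Q' x.1 x.2) /\
    fequiv f (bigOr [seq basic x.1 x.2 | x <- l]).

Definition tree (D : Type) (T : seq D -> Prop) : Prop :=
  T [::] /\ forall w d, T (rcons w d) -> T w.
Definition is_child (D : Type) (T : seq D -> Prop) (w w' : seq D) : Prop :=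
  exists d, w' = rcons w d /\ T w'.
Definition nonblocking (D : Type) (T : seq D -> Prop) : Prop :=
  forall w, T w -> exists d, T (rcons w d).
Definition inf_path (D : Type) (T : seq D -> Prop) (pi : nat -> seq D) : Prop :=
  pi 0 = [::] /\ forall k, is_child T (pi k) (pi k.+1).
Definition on_path (D : Type) (pi : nat -> seq D) (w : seq D) : Prop :=
  exists k, pi k = w.

Definition kripke (AP : finType) (P : {set AP}) (D : Type)
    (T : seq D -> Prop) (Lab : seq D -> {set AP}) : Prop :=
  tree T /\ nonblocking T /\ forall w, T w -> Lab w \subset P.

Definition chain_proj (AP : finType) (D : Type) (p : AP)
    (L : (seq D -> Prop) -> (seq D -> {set AP}) -> Prop)
    (T : seq D -> Prop) (Lab : seq D -> {set AP}) : Prop :=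
  kripke [set~ p] T Lab /\
  exists pi, inf_path T pi /\
    exists Lab', L T Lab' /\
      forall w, T w ->
        (on_path pi w -> Lab' w :\ p = Lab w) /\
        (~ on_path pi w -> Lab' w = Lab w).

Record fta (Sig : Type) (Q : finType) := FTA {
  delta : Q -> Sig -> form Q;
  q0 : Q;
  Omega : Q -> nat }.

Definition is_run (Sig : Type) (Q : finType) (A : fta Sig Q) (D : Type)
    (T : seq D -> Prop) (Lab : seq D -> Sig)
    (Dr : Type) (Tr : seq Dr -> Prop) (Labr : seq Dr -> Q * seq D) : Prop :=
  tree Tr /\ Labr [::] = (q0 A, [::]) /\
  forall y, Tr y ->
    exists I : seq D -> {set Q},
      models (is_child T (Labr y).2) I (delta A (Labr y).1 (Lab (Labr y).2)) /\
      (forall d, Tr (rcons y d) ->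
          is_child T (Labr y).2 (Labr (rcons y d)).2 /\
          (Labr (rcons y d)).1 \in I (Labr (rcons y d)).2) /\
      (forall w' q', is_child T (Labr y).2 w' -> q' \in I w' ->
          exists d, Tr (rcons y d) /\ Labr (rcons y d) = (q', w')).

Definition inf_often (c : nat -> nat) (m : nat) : Prop :=
  forall n, exists k, n <= k /\ c k = m.

Definition parity_ok (c : nat -> nat) : Prop :=
  exists m, ~~ odd m /\ inf_often c m /\ forall m', inf_often c m' -> m' <= m.

Definition accepting (Sig : Type) (Q : finType) (A : fta Sig Q) (D : Type)
    (Dr : Type) (Tr : seq Dr -> Prop) (Labr : seq Dr -> Q * seq D) : Prop :=
  forall rho, inf_path Tr rho -> parity_ok (fun k => Omega A (Labr (rho k)).1).

Definition lang (Sig : Type) (Q : finType) (A : fta Sig Q) (D : Type)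
    (T : seq D -> Prop) (Lab : seq D -> Sig) : Prop :=
  tree T /\ nonblocking T /\
  exists (Dr : Type) (Tr : seq Dr -> Prop) (Labr : seq Dr -> Q * seq D),
    is_run A T Lab Tr Labr /\ accepting A Tr Labr.

(* The ordered partition H is given by hord: the component of q is
   [set q' | hord q' == hord q], and its order is hord q.
   hexist i holds iff the component of order i is in H_exists. *)
Record hfta (Sig : Type) (Q : finType) := HFTA {
  aut : fta Sig Q;
  hord : Q -> nat;
  hexist : pred nat }.

Definition exist_shape (Sig : Type) (Q : finType) (H : hfta Sig Q) (i : nat)
    (f : form Q) : Prop :=
  exists l : seq (Q * form Q),
    (forall qt, Stdlib.Lists.List.In qt l ->
       hord H qt.1 = i /\ all (fun q => hord H q < i) (fstates qt.2) /\
       all (pred1 0) (fv qt.2)) /\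
    fequiv f (bigOr [seq FEx 0 (FAnd (FAtom qt.1 0) qt.2) | qt <- l]).

Definition univ_shape (Sig : Type) (Q : finType) (H : hfta Sig Q) (i : nat)
    (f : form Q) : Prop :=
  exists l : seq (Q * form Q),
    (forall qt, Stdlib.Lists.List.In qt l ->
       hord H qt.1 = i /\ all (fun q => hord H q < i) (fstates qt.2) /\
       all (pred1 0) (fv qt.2)) /\
    fequiv f (bigAnd [seq FAll 0 (FOr (FAtom qt.1 0) qt.2) | qt <- l]).

Definition trans_shape (Sig : Type) (Q : finType) (H : hfta Sig Q) (i : nat)
    (f : form Q) : Prop :=
  exists g, sentence g /\ all (fun q => hord H q < i) (fstates g) /\ fequiv f g.

Definition is_hfta (Sig : Type) (Q : finType) (H : hfta Sig Q) : Prop :=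
  (forall q a, sentence (delta (aut H) q a)) /\
  forall i, (exists q, hord H q = i) ->
    if hexist H i then
      (forall q a, hord H q = i -> exist_shape H i (delta (aut H) q a)) /\
      (exists m, ~~ odd m /\
         forall q, hord H q = i -> Omega (aut H) q \in [:: m.-1; m])
    else
      (forall q a, hord H q = i -> trans_shape H i (delta (aut H) q a)) \/
      ((forall q a, hord H q = i -> univ_shape H i (delta (aut H) q a)) /\
       (exists m, odd m /\
          forall q, hord H q = i -> Omega (aut H) q \in [:: m.-1; m])).

Definition Ql (Sig : Type) (Q : finType) (H : hfta Sig Q) : {set Q} :=
  [set q | hord H q == hord H (q0 (aut H))].

Definition nondet_one_path (Sig : Type) (Q : finType) (D : Type) (H : hfta Sig Q) : Prop :=
  hexist H (hord H (q0 (aut H))) /\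
  (forall q a, q \in Ql H -> functional (Ql H) (delta (aut H) q a)) /\
  (forall (T : seq D -> Prop) (Lab : seq D -> Sig), lang (aut H) T Lab ->
     forall pi, inf_path T pi ->
       exists (Dr : Type) (Tr : seq Dr -> Prop) (Labr : seq Dr -> Q * seq D),
         is_run (aut H) T Lab Tr Labr /\ accepting (aut H) Tr Labr /\
         forall w, on_path pi w ->
           exists y, Tr y /\ (Labr y).2 = w /\ (Labr y).1 \in Ql H /\
             forall y', Tr y' -> (Labr y').2 = w -> y' = y).

(* the automaton  exists^C p. A  (its alphabet 2^(AP\{p}) is handled by
   restricting to trees whose labels avoid p) *)
Definition proj_aut (AP : finType) (Q : finType) (H : hfta {set AP} Q) (p : AP)
    : hfta {set AP} Q :=
  HFTA (FTA (fun q a => if q \in Ql H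
                        then FOr (delta (aut H) q a) (delta (aut H) q (p |: a))
                        else delta (aut H) q a)
            (q0 (aut H)) (Omega (aut H)))
       (hord H) (hexist H).

(* In an HFTA that is nondeterministic in one path, the states of the component [Ql H] of
   the initial state can be made to follow a single branch of the input tree; that branch
   is the chain along which [p] is guessed.

   Given an infinite path [pi] and a relabelling of it accepted by [A], take an accepting
   run of [A] reading every node of [pi] exactly once, in [Ql H].  Nodes of [pi] are never
   read outside [Ql H], and on [pi] the letter seen is [a] or [p |: a], so this run is
   also a run of the projected automaton.

   Conversely, at each [Ql H]-node of an accepting run of the projected automaton one of
   delta(q, a), delta(q, p |: a) holds.  Being [Ql H]-functional in one direction, it stays
   true after shrinking the one-step interpretation so that exactly one child gets a
   [Ql H]-state and all others states of lower order; elsewhere only states of order at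
   most the current one are needed.  After also removing duplicate children, the
   [Ql H]-nodes of the pruned run form a spine reading an infinite path [pi]; adding [p] on
   [pi] where the second disjunct was used gives a tree on which the pruned run is an
   accepting run of [A], as its infinite paths are paths of the original run. *)

From mathcomp Require Import all_boot.
From Stdlib Require List.
From Stdlib Require Import Classical ClassicalEpsilon.

Set Implicit Arguments. Unset Strict Implicit. Unset Printing Implicit Defensive.

Lemma InP (T : eqType) (x : T) (s : seq T) : reflect (List.In x s) (x \in s).
Proof.
apply: (iffP idP); elim: s => [|a s IH] //=; rewrite in_cons.
- by case/orP => [/eqP->|/IH]; [left|right].
- by case=> [->|/IH->]; rewrite ?eqxx ?orbT.
Qed.

Section Satisfaction.
Variables (Q : finType) (X : Type) (S : X -> Prop).
Implicit Types (f g : form Q) (I : X -> {set Q}) (e : nat -> X).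

Lemma sat_mono f I I' e :
  (forall v r, r \in fstates f -> r \in I v -> r \in I' v) ->
  sat S I e f -> sat S I' e f.
Proof.
elim: f e => //= [q x|f IHf g IHg|f IHf g IHg|x f IH|x f IH] e hI.
- by apply: hI; rewrite inE.
- by case=> h; [left; apply: IHf h|right; apply: IHg h] => v r hr; apply: hI;
    rewrite mem_cat hr ?orbT.
- by case=> h h'; split; [apply: IHf h|apply: IHg h'] => v r hr; apply: hI;
    rewrite mem_cat hr ?orbT.
- by case=> v [Sv h]; exists v; split; last exact: IH h.
- by move=> h v Sv; apply: IH (h v Sv).
Qed.

Lemma sat_eq_fv I f e1 e2 :
  (forall x, x \in fv f -> e1 x = e2 x) -> sat S I e1 f -> sat S I e2 f.
Proof.
have agree_upd x v f' (e e' : nat -> X) :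
    (forall y, y \in filter (predC1 x) (fv f') -> e y = e' y) ->
    forall y, y \in fv f' -> upd e x v y = upd e' x v y.
  by move=> h y hy; rewrite /upd; case: eqP => // /eqP ne; apply: h; rewrite mem_filter /= ne.
elim: f e1 e2 => //= [q x|x y|x y|f IHf g IHg|f IHf g IHg|x f IH|x f IH] e1 e2 h.
- by rewrite h // inE.
- by rewrite !h // !inE eqxx ?orbT.
- by rewrite !h // !inE eqxx ?orbT.
- by case=> h1; [left; apply: IHf h1|right; apply: IHg h1] => y hy; apply: h;
    rewrite mem_cat hy ?orbT.
- by case=> h1 h2; split; [apply: IHf h1|apply: IHg h2] => y hy; apply: h;
    rewrite mem_cat hy ?orbT.
- by case=> v [Sv hv]; exists v; split; last exact: IH _ _ (agree_upd x v f e1 e2 h) hv.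
- by move=> hall v Sv; exact: IH _ _ (agree_upd x v f e1 e2 h) (hall v Sv).
Qed.

Lemma sentence_sat I f e e' : sentence f -> sat S I e f -> sat S I e' f.
Proof. by move=> /nilP sf; apply: sat_eq_fv => x; rewrite sf. Qed.

Lemma models_FOr_sentence I f g :
  (exists s, S s) -> sentence f -> sentence g ->
  models S I (FOr f g) -> models S I f \/ models S I g.
Proof.
move=> [s Ss] sf sg /(_ (fun=> s) (fun=> Ss)) [h|h]; [left|right] => e _;
  exact: sentence_sat h.
Qed.

Lemma sat_bigOr I l e : sat S I e (bigOr l) <-> exists f, List.In f l /\ sat S I e f.
Proof.
elim: l => [|f l IH] /=; first by split=> // [[f []]].
rewrite IH; split; first by case=> [h|[g [hg h]]]; [exists f|exists g]; tauto.
by case=> g [[<-|hg] h]; [left|right; exists g].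
Qed.

Lemma sat_bigAnd I l e : sat S I e (bigAnd l) <-> forall f, List.In f l -> sat S I e f.
Proof.
elim: l => [|f l IH] //=; rewrite IH; split; first by case=> h1 h2 g [<-|]; auto.
by move=> h; split; auto.
Qed.

Lemma sat_ftype I A x e : sat S I e (ftype A x) <-> A \subset I (e x).
Proof.
rewrite /ftype sat_bigAnd; split.
- move=> h; apply/subsetP => q; rewrite -mem_enum => /InP hq.
  by apply: (h (FAtom q x)); apply/List.in_map_iff; exists q.
- move/subsetP=> h _ /List.in_map_iff [q [<- /InP]]; rewrite mem_enum; exact: h.
Qed.

Lemma sat_FExs I n f e :
  sat S I e (FExs n f) <->
  exists e', [/\ forall i, i < n -> S (e' i), forall i, n <= i -> e' i = e i & sat S I e' f].
Proof.
elim: n f e => [|n IH] f e /=.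
  split=> [h|[e' [_ he']]]; first by exists e.
  by apply: sat_eq_fv => x _; apply: he'.
rewrite IH; split.
- case=> e1 [hS he1 [v [Sv hv]]]; exists (upd e1 n v); split=> // i; rewrite /upd.
  + by rewrite ltnS leq_eqVlt => /orP[/eqP->|/hS]; [rewrite eqxx|case: eqP].
  + by move=> ni; rewrite (gtn_eqF ni) he1 // ltnW.
- case=> e' [hS he' hf]; exists (upd e' n (e n)); split.
  + by move=> i lt; rewrite /upd (ltn_eqF lt); apply: hS; rewrite ltnS ltnW.
  + move=> i; rewrite /upd leq_eqVlt => /orP[/eqP<-|lt]; first by rewrite eqxx.
    by rewrite (gtn_eqF lt) he'.
  + exists (e' n); split; first exact: hS.
    by apply: sat_eq_fv hf => x _; rewrite /upd; case: eqP => // ->.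
Qed.
End Satisfaction.

Lemma In_ordered_pairs (A : Type) k (F : nat -> nat -> A) a :
  List.In a (flatten [seq [seq F i j | j <- iota 0 k & j != i] | i <- iota 0 k]) <->
  exists i j, [/\ i < k, j < k, i != j & a = F i j].
Proof.
rewrite List.in_concat; split.
- case=> s [/List.in_map_iff [i [<- /InP]]]; rewrite mem_iota => /= hi.
  case/List.in_map_iff=> j [<- /List.filter_In [/InP]]; rewrite mem_iota /= => hj ji.
  by exists i, j; rewrite eq_sym.
- case=> i [j [hi hj ij ->]]; exists [seq F i j | j <- iota 0 k & j != i]; split.
  + by apply/List.in_map_iff; exists i; split=> //; apply/InP; rewrite mem_iota.
  + apply/List.in_map_iff; exists j; split=> //; apply/List.filter_In.
    by split; [apply/InP; rewrite mem_iota|rewrite eq_sym].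
Qed.

Section BasicFormulas.
Variables (Q : finType) (X : Type) (S : X -> Prop).
Implicit Types (I : X -> {set Q}) (e : nat -> X).

Lemma sat_fdiff I k e :
  sat S I e (fdiff Q k) <-> forall i j, i < k -> j < k -> i != j -> e i <> e j.
Proof.
rewrite /fdiff sat_bigAnd; split.
- by move=> h i j hi hj ij; apply: (h (@FNeq Q i j)); apply/In_ordered_pairs; exists i, j.
- by move=> h f /In_ordered_pairs [i [j [hi hj ij ->]]]; apply: h.
Qed.

Lemma sat_fndiff I k e :
  sat S I e (fndiff Q k) <-> exists i j, [/\ i < k, j < k, i != j & e i = e j].
Proof.
rewrite /fndiff sat_bigOr; split.
- by case=> f [/In_ordered_pairs [i [j [hi hj ij ->]]] /= h]; exists i, j.
- case=> i [j [hi hj ij h]]; exists (@FEq Q i j); split=> //.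
  by apply/In_ordered_pairs; exists i, j.
Qed.

Definition basic_sem I (TE TA : {set {set Q}}) (e' : nat -> X) : Prop :=
  let n := size (enum TE) in
  [/\ forall i, i < n -> S (e' i),
      forall i j, i < n -> j < n -> i != j -> e' i <> e' j,
      forall i, i < n -> nth set0 (enum TE) i \subset I (e' i) &
      forall v, S v -> (exists2 i, i < n & v = e' i) \/ exists2 B, B \in TA & B \subset I v].

Lemma sat_basic I TE TA e :
  sat S I e (basic TE TA) <-> exists e', basic_sem I TE TA e'.
Proof.
rewrite /basic sat_FExs; set n := size (enum TE); split.
- case=> e' [hS _ /= [/sat_fdiff hd [/sat_bigAnd ht hA]]]; exists e'; split=> //.
  + move=> i hi; apply/(sat_ftype S I _ i e')/ht/List.in_map_iff.
    by exists i; split=> //; apply/InP; rewrite mem_iota.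
  + move=> v Sv; case: (hA v Sv) => [/sat_fndiff [i [j [hi hj ij E]]]|/sat_bigOr].
    * move: E; rewrite /upd.
      case: (eqVneq i n) => [Ei|ni]; case: (eqVneq j n) => [Ej|nj] /= E.
      - by move: ij; rewrite Ei Ej eqxx.
      - by left; exists j; rewrite // ltn_neqAle nj -ltnS.
      - by left; exists i; rewrite // ltn_neqAle ni -ltnS.
      - by case: (hd i j _ _ ij E); rewrite ltn_neqAle ?ni ?nj -ltnS.
    * case=> _ [/List.in_map_iff [B [<- /InP hB]] /sat_ftype]; rewrite /upd eqxx => hBv.
      by right; exists B; first rewrite -mem_enum.
- case=> e' [hS hd ht hA]; exists (fun i => if i < n then e' i else e i); split.
  + by move=> i hi; rewrite hi; apply: hS.
  + by move=> i; rewrite leqNgt => /negbTE ->.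
  split=> /=; first by apply/sat_fdiff => i j hi hj; rewrite hi hj; apply: hd.
  split.
    apply/sat_bigAnd => _ /List.in_map_iff [i [<- /InP]]; rewrite mem_iota /= => hi.
    by apply/sat_ftype; rewrite hi; apply: ht.
  move=> v Sv; case: (hA v Sv) => [[i hi ->]|[B hB hBv]].
  + left; apply/sat_fndiff; exists i, n; rewrite /upd eqxx ltnS ltnW // ltnS leqnn.
    by rewrite (ltn_eqF hi) hi.
  + right; apply/sat_bigOr; exists (ftype B n); split; last first.
      by apply/sat_ftype; rewrite /upd eqxx.
    by apply/List.in_map_iff; exists B; split=> //; apply/InP; rewrite mem_enum.
Qed.
End BasicFormulas.

Lemma models_functional_basic (Q : finType) (X : Type) (S : X -> Prop)
    (Q' : {set Q}) (I : X -> {set Q}) f :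
  (exists s, S s) -> functional Q' f -> models S I f ->
  exists TE TA e', [/\ functional_basic Q' TE TA, basic_sem S I TE TA e' &
    forall I', basic_sem S I' TE TA e' -> models S I' f].
Proof.
move=> ne [_ [l [hl eqv]]] /(eqv X S I ne) hm; have [s Ss] := ne.
case/sat_bigOr: (hm (fun=> s) (fun=> Ss)) => _ [/List.in_map_iff [[TE TA] [<- hin]]].
case/sat_basic=> e' he'; exists TE, TA, e'; split=> [||I' he'I]; first exact: hl hin.
  exact: he'.
apply/(eqv X S I' ne) => e _; apply/sat_bigOr; exists (basic TE TA).
by split; [apply/List.in_map_iff; exists (TE, TA)|apply/sat_basic; exists e'].
Qed.

Section Hierarchy.
Variables (Sig : Type) (Q : finType) (H : hfta Sig Q).
Hypothesis hH : is_hfta H.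

Lemma fstates_univ_exist (l : seq (Q * form Q)) :
  fstates (bigAnd [seq FAll 0 (FOr (FAtom qt.1 0) qt.2) | qt <- l]) =
  fstates (bigOr [seq FEx 0 (FAnd (FAtom qt.1 0) qt.2) | qt <- l]).
Proof. by elim: l => //= qt l ->. Qed.

Lemma fstates_exist_shape (l : seq (Q * form Q)) i r :
  (forall qt, List.In qt l -> hord H qt.1 = i /\
     all (fun q => hord H q < i) (fstates qt.2) /\ all (pred1 0) (fv qt.2)) ->
  r \in fstates (bigOr [seq FEx 0 (FAnd (FAtom qt.1 0) qt.2) | qt <- l]) -> hord H r <= i.
Proof.
elim: l => [|qt l IH] //= hl; have [Ei [/allP hlt _]] := hl qt (or_introl erefl).
rewrite in_cons mem_cat => /orP[/eqP->|/orP[/hlt/ltnW //|]]; first by rewrite Ei.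
by apply: IH => qt' h; apply: hl; right.
Qed.

Lemma delta_order_bound q a : exists2 g,
  fequiv (delta (aut H) q a) g & forall r, r \in fstates g -> hord H r <= hord H q.
Proof.
have := hH.2 (hord H q) (ex_intro _ q erefl).
case: (hexist H (hord H q)) => [[/(_ q a erefl) [l [hl eqv]] _]|].
  by exists (bigOr [seq FEx 0 (FAnd (FAtom qt.1 0) qt.2) | qt <- l]) => // r;
    apply: fstates_exist_shape hl.
case=> [/(_ q a erefl) [g [_ [/allP hg eqv]]]|[/(_ q a erefl) [l [hl eqv]] _]].
  by exists g => // r /hg /ltnW.
exists (bigAnd [seq FAll 0 (FOr (FAtom qt.1 0) qt.2) | qt <- l]) => // r.
by rewrite fstates_univ_exist; apply: fstates_exist_shape hl.
Qed.

Lemma models_delta_order_restrict (X : Type) (S : X -> Prop) (I : X -> {set Q}) q a :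
  (exists s, S s) -> models S I (delta (aut H) q a) ->
  models S (fun v => [set r in I v | hord H r <= hord H q]) (delta (aut H) q a).
Proof.
move=> ne; have [g eqv hg] := delta_order_bound q a.
rewrite !(eqv X S _ ne) => hm e he; apply: sat_mono (hm e he) => v r hr hI.
by rewrite inE hI hg.
Qed.
Lemma models_Ql_single_successor (X : Type) (S : X -> Prop) (I : X -> {set Q}) q a :
  (exists s, S s) -> q \in Ql H -> functional (Ql H) (delta (aut H) q a) ->
  models S I (delta (aut H) q a) ->
  exists I' : X -> {set Q},
    [/\ forall v, I' v \subset I v, models S I' (delta (aut H) q a) &
      exists x q', [/\ S x, q' \in Ql H, I' x = [set q'] &
        forall v, v <> x -> forall r, r \in I' v -> hord H r < hord H q]].
Proof.
move=> ne hq hfun hI.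
have [TE [TA [e' [[A hA [q' hq' [EA hdis]]] [hS hd ht hall] models_sem]]]] :=
  models_functional_basic ne hfun hI.
have hqq' : hord H q' = hord H q by move: hq' hq; rewrite !inE => /eqP-> /eqP->.
set As := enum TE in hS hd ht hall; set j := index A As; set x := e' j.
have hj : j < size As by rewrite index_mem mem_enum.
have nthj : nth set0 As j = A by rewrite nth_index ?mem_enum.
(* Keep the witness for [A = {q'}] as the only [Ql H]-successor; [TE :\ A] and [TA]
   avoid [Ql H], so every other requirement survives removing [Ql H]. *)
pose I1 v := if excluded_middle_informative (v = x) then [set q'] else I v :\: Ql H.
have I1x : I1 x = [set q'] by rewrite /I1; case: excluded_middle_informative.
have I1D v : v <> x -> I1 v = I v :\: Ql H.
  by rewrite /I1; case: excluded_middle_informative.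
have avoid B v : B \in (TE :\ A) :|: TA -> B \subset I v -> B \subset I v :\: Ql H.
  by move=> /hdis hB hBv; rewrite subsetD hBv.
have sem1 : basic_sem S I1 TE TA e'.
  split=> // [i hi|v Sv].
  - have [-> {i hi}|ij] := eqVneq i j; first by rewrite nthj EA I1x.
    rewrite I1D; last exact: hd.
    apply: avoid (ht i hi).
    by rewrite !inE -mem_enum mem_nth // andbT -nthj nth_uniq ?enum_uniq // ij.
  - have [->|nx] := classic (v = x); first by left; exists j.
    case: (hall v Sv) => [|[B hB hBv]]; first by left.
    by right; exists B; rewrite // I1D //; apply: avoid; rewrite // inE hB orbT.
exists (fun v => [set r in I1 v | hord H r <= hord H q]); split.
- move=> v; apply/subsetP => r; rewrite inE; have [->|nx] := classic (v = x).
    rewrite I1x inE => /andP[/eqP-> _].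
    by apply: (subsetP (ht j hj)); rewrite nthj EA set11.
  by rewrite I1D // !inE => /andP[/andP[_ ->]].
- exact: models_delta_order_restrict ne (models_sem I1 sem1).
- exists x, q'; split=> //; first exact: hS.
    by apply/setP => r; rewrite !inE I1x inE; case: eqP => // ->; rewrite hqq' leqnn.
  move=> v nx r; rewrite inE I1D // !inE => /andP[/andP[nr _]].
  by rewrite leq_eqVlt; move: hq nr; rewrite inE => /eqP-> /negbTE->.
Qed.
End Hierarchy.

Lemma setD1_notin (T : finType) (a : T) (A : {set T}) : a \notin A -> A :\ a = A.
Proof. by move=> aA; apply/setDidPl; rewrite disjoint_sym disjoints1. Qed.

Lemma run_reads_tree (Sig : Type) (Q : finType) (A : fta Sig Q) (D Dr : Type)
    (T : seq D -> Prop) (Lab : seq D -> Sig) (Tr : seq Dr -> Prop)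
    (Labr : seq Dr -> Q * seq D) :
  tree T -> is_run A T Lab Tr Labr ->
  forall y, Tr y -> T (Labr y).2 /\ size (Labr y).2 = size y.
Proof.
move=> [T0 _] [[_ Tr_prefix] [root step]].
elim/last_ind=> [|y d IH] hyd; first by rewrite root.
have [I [_ [/(_ d hyd) [[d' [-> Tw]] _] _]]] := step y (Tr_prefix _ _ hyd).
by rewrite !size_rcons (IH (Tr_prefix _ _ hyd)).2.
Qed.

Lemma lang_proj_of_chain_proj (AP Q : finType) (D : Type) (H : hfta {set AP} Q) (p : AP)
    (T : seq D -> Prop) (Lab : seq D -> {set AP}) :
  nondet_one_path D H -> chain_proj p (@lang {set AP} Q (aut H) D) T Lab ->
  kripke [set~ p] T Lab /\ lang (aut (proj_aut H p)) T Lab.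
Proof.
move=> [_ [_ hnd]] [hk [pi [hpi [Lab' [hL hLab]]]]]; split=> //.
have [hT [hnb _]] := hk; split=> //; split=> //.
have [Dr [Tr [Labr [hrun [hacc hpi_once]]]]] := hnd T Lab' hL pi hpi.
exists Dr, Tr, Labr; split=> //; have [Tr_tree [root step]] := hrun; split=> //; split=> // y hy.
have [I [hm hrest]] := step y hy; exists I; split=> //.
have [Tw _] := run_reads_tree hT hrun hy.
move: hm; set w := (Labr y).2; set q := (Labr y).1 => hm.
have [on_pi off_pi] := hLab w Tw.
rewrite /=; case: ifP => hq.
- move=> e he; have [/on_pi Ew|/off_pi <-] := classic (on_path pi w); last by left; apply: hm.
  case: (boolP (p \in Lab' w)) => pw.
  + by right; rewrite -Ew setD1K //; apply: hm.
  + by left; rewrite -Ew setD1_notin //; apply: hm.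
- have off : ~ on_path pi w.
    move=> /hpi_once [y0 [_ [_ [hq0 uniq_y0]]]].
    by move: hq0; rewrite -(uniq_y0 y hy erefl) -/q hq.
  by rewrite -(off_pi off).
Qed.

Section Pruning.
Variables (AP Q : finType) (D Dr : Type) (H : hfta {set AP} Q) (p : AP).
Variables (T : seq D -> Prop) (Lab : seq D -> {set AP}).
Variables (Tr : seq Dr -> Prop) (Labr : seq Dr -> Q * seq D).
Hypothesis hT : tree T.
Hypothesis hrun : is_run (aut (proj_aut H p)) T Lab Tr Labr.

Local Notation l := (hord H (q0 (aut H))).

Let Tr_nil : Tr [::]. Proof. exact: hrun.1.1. Qed.
Let run_root : Labr [::] = (q0 (aut H), [::]). Proof. exact: hrun.2.1. Qed.
Let run_step := hrun.2.2.

Record step_choice := StepChoice {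
  sc_I : seq D -> {set Q}; sc_mark : bool; sc_succ : seq D; sc_state : Q }.

(* [sc_mark] records which disjunct of the projected transition was used, [sc_succ] and
   [sc_state] the unique [Ql H]-successor. *)
Record step_spec (y : seq Dr) (s : step_choice) : Prop := StepSpec {
  step_covered : forall v r, r \in sc_I s v -> is_child T (Labr y).2 v ->
    exists d, Tr (rcons y d) /\ Labr (rcons y d) = (r, v);
  step_Ql : (Labr y).1 \in Ql H ->
    [/\ models (is_child T (Labr y).2) (sc_I s) (delta (aut H) (Labr y).1
          (if sc_mark s then p |: Lab (Labr y).2 else Lab (Labr y).2)),
        is_child T (Labr y).2 (sc_succ s), sc_state s \in Ql H,
        sc_I s (sc_succ s) = [set sc_state s] &
        forall v, v <> sc_succ s -> forall r, r \in sc_I s v -> hord H r < l];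
  step_off : (Labr y).1 \notin Ql H ->
    models (is_child T (Labr y).2) (sc_I s) (delta (aut H) (Labr y).1 (Lab (Labr y).2)) /\
    forall v r, r \in sc_I s v -> hord H r <= hord H (Labr y).1 }.

Lemma step_choice_exists :
  is_hfta H -> nonblocking T ->
  (forall q a, q \in Ql H -> functional (Ql H) (delta (aut H) q a)) ->
  forall y, exists s, Tr y -> step_spec y s.
Proof.
move=> hH hnb hfun y; have [hy|] := classic (Tr y); last first.
  by exists (StepChoice (fun=> set0) false [::] (q0 (aut H))).
have [I0 [hm [_ covered]]] := run_step hy.
have ne : exists v, is_child T (Labr y).2 v.
  have [d hd] := hnb _ (run_reads_tree hT hrun hy).1.
  by exists (rcons (Labr y).2 d), d.
case Ey: (Labr y) hm covered ne => [q w] /= hm covered ne.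
case: ifP hm => hq hm; last first.
  exists (StepChoice (fun v => [set r in I0 v | hord H r <= hord H q]) false [::] q).
  move=> _; split; rewrite Ey /=.
  - by move=> v r; rewrite inE => /andP[hr _] hc; exact: covered hc hr.
  - by rewrite hq.
  - by split=> [|v r]; [exact: (models_delta_order_restrict hH ne hm)|rewrite inE => /andP[]].
have [b hb] : exists b, models (is_child T w) I0
    (delta (aut H) q (if b then p |: Lab w else Lab w)).
  by case: (models_FOr_sentence ne (hH.1 q _) (hH.1 q _) hm); [exists false|exists true].
have [I' [sub mI' [x [q' [hx hq' Ix lower]]]]] :=
  models_Ql_single_successor hH ne hq (hfun _ _ hq) hb.
exists (StepChoice I' b x q') => _; split; rewrite Ey /=.
- by move=> v r /(subsetP (sub v)) hr hc; exact: covered hc hr.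
- by split=> //; move: hq; rewrite inE => /eqP <-.
- by rewrite hq.
Qed.

Variable strat : seq Dr -> step_choice.
Hypothesis stratP : forall y, Tr y -> step_spec y (strat y).
Variable pick : seq Dr -> Q * seq D -> option Dr.
Hypothesis pickP : forall y lab, (exists d, Tr (rcons y d) /\ Labr (rcons y d) = lab) ->
  exists d, pick y lab = Some d /\ Tr (rcons y d) /\ Labr (rcons y d) = lab.

(* [pick] keeps a single child per label, so that each node of the spine path below is
   read by a single node of the pruned run. *)
Inductive pruned : seq Dr -> Prop :=
| pruned_nil : pruned [::]
| pruned_rcons y d : pruned y -> Tr (rcons y d) ->
    (Labr (rcons y d)).1 \in sc_I (strat y) (Labr (rcons y d)).2 ->
    pick y (Labr (rcons y d)) = Some d -> pruned (rcons y d).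

Lemma prunedE y d : pruned (rcons y d) ->
  [/\ pruned y, Tr (rcons y d), (Labr (rcons y d)).1 \in sc_I (strat y) (Labr (rcons y d)).2
    & pick y (Labr (rcons y d)) = Some d].
Proof.
move Ez: (rcons y d) => z hz; case: hz Ez => [|y' d' hy' htr hmem hpk] Ez.
  by move: (congr1 size Ez); rewrite size_rcons.
by case/rcons_inj: Ez => -> ->.
Qed.

Lemma pruned_Tr y : pruned y -> Tr y.
Proof. by case=> [|y' d _ htr _ _]; first exact: Tr_nil. Qed.

Definition spine_next y := (sc_state (strat y), sc_succ (strat y)).

Fixpoint spine k : seq Dr :=
  if k is k'.+1 then
    let y := spine k' in if pick y (spine_next y) is Some d then rcons y d else y
  else [::].

Definition spine_path k := (Labr (spine k)).2.

Lemma spine_step k : pruned (spine k) -> (Labr (spine k)).1 \in Ql H ->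
  exists d, [/\ spine k.+1 = rcons (spine k) d, pick (spine k) (spine_next (spine k)) = Some d,
    Tr (rcons (spine k) d) & Labr (spine k.+1) = spine_next (spine k)].
Proof.
move=> hk hq; have spec := stratP (pruned_Tr hk).
have [_ hx _ Ix _] := step_Ql spec hq.
have [|d [pk [htr lab]]] := pickP (y := spine k) (lab := spine_next (spine k)).
  by apply: step_covered spec _ _ _ hx; rewrite Ix set11.
by exists d; rewrite /= pk.
Qed.

Lemma spine_pruned_Ql k : pruned (spine k) /\ (Labr (spine k)).1 \in Ql H.
Proof.
elim: k => [|k [hk hq]]; first by rewrite run_root inE; split=> //; exact: pruned_nil.
have [d [Ek pk htr lab]] := spine_step hk hq.
have [_ _ hq' Ix _] := step_Ql (stratP (pruned_Tr hk)) hq.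
rewrite lab; split=> //; rewrite Ek.
by apply: pruned_rcons; rewrite // -Ek lab //= Ix set11.
Qed.

Lemma Labr_spine_succ k : Labr (spine k.+1) = spine_next (spine k).
Proof. by have [hk hq] := spine_pruned_Ql k; have [d [_ _ _ ->]] := spine_step hk hq. Qed.

Lemma size_spine k : size (spine k) = k.
Proof.
elim: k => // k IH; have [hk hq] := spine_pruned_Ql k.
by have [d [-> _ _ _]] := spine_step hk hq; rewrite size_rcons IH.
Qed.

Lemma size_read_pruned y : pruned y -> size (Labr y).2 = size y.
Proof. by move/pruned_Tr/(run_reads_tree hT hrun) => []. Qed.

Lemma size_spine_path k : size (spine_path k) = k.
Proof. by rewrite /spine_path size_read_pruned ?size_spine //; case: (spine_pruned_Ql k). Qed.

Lemma spine_path_child k : is_child T (spine_path k) (spine_path k.+1).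
Proof.
have [hk hq] := spine_pruned_Ql k; have [_ hx _ _ _] := step_Ql (stratP (pruned_Tr hk)) hq.
by rewrite /spine_path Labr_spine_succ.
Qed.

Lemma pruned_spine_succ k d : pruned (rcons (spine k) d) ->
  (Labr (rcons (spine k) d)).2 = sc_succ (strat (spine k)) -> rcons (spine k) d = spine k.+1.
Proof.
case/prunedE=> hk _ hmem hpk Ew; have [_ hq] := spine_pruned_Ql k.
have [_ _ _ Ix _] := step_Ql (stratP (pruned_Tr hk)) hq.
have lab : Labr (rcons (spine k) d) = spine_next (spine k).
  by move: hmem; rewrite Ew Ix inE => /eqP Eq; rewrite [LHS]surjective_pairing Eq Ew.
have [d' [-> pk _ _]] := spine_step hk hq.
by move: hpk; rewrite lab pk => -[->].
Qed.

Lemma pruned_reads_spine_path k y : pruned y -> (Labr y).2 = spine_path k -> y = spine k.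
Proof.
elim: k y => [|k IH] y hy E.
  by apply/size0nil; rewrite -size_read_pruned // E size_spine_path.
case/lastP: y hy E => [|y d] hy E.
  by move: (size_read_pruned hy); rewrite E size_spine_path.
have [hy0 htr _ _] := prunedE hy.
have [I [_ [/(_ d htr) [[d1 [E1 _]] _] _]]] := run_step (pruned_Tr hy0).
have [d2 [E2 _]] := spine_path_child k.
have Ey : y = spine k by apply: IH => //; move: E; rewrite E1 E2 => /rcons_inj [].
by rewrite Ey in hy E *; apply: pruned_spine_succ; rewrite // E /spine_path Labr_spine_succ.
Qed.

Lemma pruned_spine_or_lower y : pruned y -> (exists k, y = spine k) \/ hord H (Labr y).1 < l.
Proof.
elim=> {y} [|y d hy IH htr hmem hpk]; first by left; exists 0.
have hyd := pruned_rcons hy htr hmem hpk; have spec := stratP (pruned_Tr hy).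
case: IH => [[k Ey]|lower].
- rewrite Ey in spec hmem hyd *; have [_ hq] := spine_pruned_Ql k.
  have [_ _ _ _ lower] := step_Ql spec hq.
  have [Esucc|nsucc] := classic ((Labr (rcons (spine k) d)).2 = sc_succ (strat (spine k))).
    by left; exists k.+1; apply: pruned_spine_succ.
  by right; apply: lower nsucc _ hmem.
- right; have hq : (Labr y).1 \notin Ql H by rewrite inE neq_ltn lower.
  exact: leq_ltn_trans ((step_off spec hq).2 _ _ hmem) lower.
Qed.

Definition marked_Lab w :=
  if excluded_middle_informative (exists k, spine_path k = w /\ sc_mark (strat (spine k)))
  then p |: Lab w else Lab w.

Lemma marked_Lab_spine k : marked_Lab (spine_path k) =
  if sc_mark (strat (spine k)) then p |: Lab (spine_path k) else Lab (spine_path k).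
Proof.
rewrite /marked_Lab; case: excluded_middle_informative => [[k' [Ek' mk']]|nomark] /=.
  have -> : k = k' by rewrite -(size_spine_path k) -Ek' size_spine_path.
  by rewrite mk'.
by case: ifP => // mk; case: nomark; exists k.
Qed.

Lemma marked_Lab_off w : (forall k, spine_path k <> w) -> marked_Lab w = Lab w.
Proof.
rewrite /marked_Lab => off; case: excluded_middle_informative => // marked.
by exfalso; have [k [/off]] := marked.
Qed.

Lemma pruned_run : is_run (aut H) T marked_Lab pruned Labr.
Proof.
split; first by split=> [|y d /prunedE []]; first exact: pruned_nil.
split=> // y hy; have spec := stratP (pruned_Tr hy); exists (sc_I (strat y)); split; [|split].
- case: (pruned_spine_or_lower hy) => [[k Ey]|lower].
    have [_ hq] := spine_pruned_Ql k; rewrite Ey in spec *.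
    by have [hm _ _ _ _] := step_Ql spec hq; rewrite -/(spine_path k) marked_Lab_spine.
  have hq : (Labr y).1 \notin Ql H by rewrite inE neq_ltn lower.
  rewrite marked_Lab_off; first exact: (step_off spec hq).1.
  by move=> k /esym/(pruned_reads_spine_path hy) Ey; move: hq; rewrite Ey (spine_pruned_Ql k).2.
- move=> d /prunedE [_ htr hmem _]; split=> //.
  by have [I [_ [/(_ d htr) []]]] := run_step (pruned_Tr hy).
- move=> w' q' hc hq'; have [d0 hd0] := step_covered spec hq' hc.
  have [d [pk [htr lab]]] := pickP (ex_intro _ d0 hd0).
  by exists d; split=> //; apply: pruned_rcons; rewrite // lab.
Qed.

Lemma pruned_accepting :
  accepting (aut (proj_aut H p)) Tr Labr -> accepting (aut H) pruned Labr.
Proof.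
move=> hacc rho [rho0 rho_child]; apply: hacc; split=> // k.
by have [d [E /pruned_Tr hd]] := rho_child k; exists d.
Qed.

Lemma chain_proj_of_pruned :
  kripke [set~ p] T Lab -> accepting (aut (proj_aut H p)) Tr Labr ->
  chain_proj p (@lang {set AP} Q (aut H) D) T Lab.
Proof.
move=> hk hacc; split=> //; exists spine_path; split.
  by split; [rewrite /spine_path run_root|exact: spine_path_child].
have [_ [hnb Lab_sub]] := hk.
exists marked_Lab; split.
  split=> //; split=> //; exists Dr, pruned, Labr.
  by split; [exact: pruned_run|exact: pruned_accepting].
move=> w /Lab_sub/subsetP/(_ p)/contraNN; rewrite !inE eqxx => /(_ isT) np.
split=> [[k Ek]|off]; last by apply: marked_Lab_off => k Ek; apply: off; exists k.
by subst w; rewrite marked_Lab_spine; case: ifP => _; [exact: setU1K|exact: setD1_notin].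
Qed.
End Pruning.

Lemma option_choice (A B : Type) (R : A -> B -> Prop) :
  exists f : A -> option B, forall a, (exists b, R a b) -> exists b, f a = Some b /\ R a b.
Proof.
apply: (@choice _ _ (fun a o => (exists b, R a b) -> exists b, o = Some b /\ R a b)) => a.
have [[b hb]|nb] := classic (exists b, R a b); first by exists (Some b) => _; exists b.
by exists None => /nb.
Qed.

Lemma chain_proj_of_lang_proj (AP Q : finType) (D : Type) (H : hfta {set AP} Q) (p : AP)
    (T : seq D -> Prop) (Lab : seq D -> {set AP}) :
  is_hfta H -> nondet_one_path D H ->
  kripke [set~ p] T Lab /\ lang (aut (proj_aut H p)) T Lab ->
  chain_proj p (@lang {set AP} Q (aut H) D) T Lab.
Proof.
move=> hH [_ [hfun _]] [hk [hT [hnb [Dr [Tr [Labr [hrun hacc]]]]]]].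
have [strat stratP] := @choice _ _ _ (step_choice_exists hT hrun hH hnb hfun).
have [pick pickP] := option_choice
  (fun (yl : seq Dr * (Q * seq D)) d => Tr (rcons yl.1 d) /\ Labr (rcons yl.1 d) = yl.2).
exact: (chain_proj_of_pruned hT hrun stratP (pick := fun y lab => pick (y, lab))
  (fun y lab => pickP (y, lab)) hk hacc).
Qed.

Theorem proposition14 (AP Q : finType) (D : Type) (H : hfta {set AP} Q) (p : AP) :
  is_hfta H -> nondet_one_path D H ->
  forall (T : seq D -> Prop) (Lab : seq D -> {set AP}),
    (kripke [set~ p] T Lab /\ lang (aut (proj_aut H p)) T Lab) <->
    chain_proj p (@lang {set AP} Q (aut H) D) T Lab.
Proof.
move=> hH hnd T Lab; split; first exact: chain_proj_of_lang_proj.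
exact: lang_proj_of_chain_proj.
Qed.
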